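(* Let $X$ be a real Banach space and let $g:X^*\to(-\infty,+\infty]$ be a proper convex weak$^*$-lower semicontinuous function. Let $\varepsilon>0$, $\beta\ge 0$, $x_0^*\in\operatorname{dom} g$, and $x_0\in\partial_\varepsilon g(x_0^* )\cap X$. Then there exist $x_\varepsilon^*\in\operatorname{dom} g$ and $x_\varepsilon\in X$ such that (i) $x_\varepsilon\in\partial g(x_\varepsilon^* )\cap X$; (ii) $\|x_\varepsilon^*-x_0^*\|\le\sqrt{\varepsilon}\,(1+\beta\|x_0^*\|)$; (iii) $|g(x_\varepsilon^* )-g(x_0^* )|\le\sqrt{\varepsilon}\,(\|x_0\|+\beta|\langle x_0^*,x_0\rangle|)+2\varepsilon$; (iv) $\|x_\varepsilon-x_0\|\le\sqrt{\varepsilon}$; (v) $|\langle x_\varepsilon,x^*\rangle-\langle x_0,x^*\rangle|\le\sqrt{\varepsilon}\,\|x^*\|$ for all $x^*\in X^*$; (vi) $x_0\in\partial_{2\varepsilon} g(x_\varepsilon^* )$; (vii) $|\langle x_\varepsilon-x_0,x_\varepsilon^*-x_0^*\rangle|\le\varepsilon$.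
   Context: $X^*$ is the dual of $X$, and $X$ is identified with its canonical image in $X^{**}$. $\operatorname{dom} g=\{x^*\in X^*: g(x^* )<+\infty\}$; ''proper'' means $g$ never takes the value $-\infty$ and $\operatorname{dom} g\neq\emptyset$. For $x^*\in\operatorname{dom} g$ and $\varepsilon\ge 0$, $\partial_\varepsilon g(x^* )=\{x^{**}\in X^{**}:\langle x^{**},y^*-x^*\rangle\le g(y^* )-g(x^* )+\varepsilon\ \text{for all } y^*\in X^*\}$, and $\partial g=\partial_0 g$; so $\partial_\varepsilon g(x^* )\cap X=\{x\in X:\langle y^*-x^*,x\rangle\le g(y^* )-g(x^* )+\varepsilon\ \forall y^*\in X^*\}$. *)

From Stdlib Require Import Reals Lra Psatz List.
Open Scope R_scope.

Record NormedSpace := {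
  ncarrier :> Type;
  nzero : ncarrier;
  nadd : ncarrier -> ncarrier -> ncarrier;
  nopp : ncarrier -> ncarrier;
  nscal : R -> ncarrier -> ncarrier;
  nnorm : ncarrier -> R;
  nadd_assoc : forall x y z, nadd x (nadd y z) = nadd (nadd x y) z;
  nadd_comm : forall x y, nadd x y = nadd y x;
  nadd_zero : forall x, nadd x nzero = x;
  nadd_opp : forall x, nadd x (nopp x) = nzero;
  nscal_assoc : forall a b x, nscal a (nscal b x) = nscal (a * b) x;
  nscal_one : forall x, nscal 1 x = x;
  nscal_distr_v : forall a x y, nscal a (nadd x y) = nadd (nscal a x) (nscal a y);
  nscal_distr_s : forall a b x, nscal (a + b) x = nadd (nscal a x) (nscal b x);
  nnorm_nonneg : forall x, 0 <= nnorm x;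
  nnorm_zero : nnorm nzero = 0;
  nnorm_eq0 : forall x, nnorm x = 0 -> x = nzero;
  nnorm_scal : forall a x, nnorm (nscal a x) = Rabs a * nnorm x;
  nnorm_triangle : forall x y, nnorm (nadd x y) <= nnorm x + nnorm y
}.

Arguments nzero {_}. Arguments nadd {_}. Arguments nopp {_}.
Arguments nscal {_}. Arguments nnorm {_}.

Definition vsub {X : NormedSpace} (x y : X) : X := nadd x (nopp y).

Definition complete (X : NormedSpace) : Prop :=
  forall u : nat -> X,
    (forall e, 0 < e -> exists N, forall m n, (N <= m)%nat -> (N <= n)%nat ->
        nnorm (vsub (u m) (u n)) < e) ->
    exists l : X, forall e, 0 < e -> exists N, forall n, (N <= n)%nat ->
        nnorm (vsub (u n) l) < e.

Record dual (X : NormedSpace) := {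
  dfun :> X -> R;
  dlin_add : forall x y, dfun (nadd x y) = dfun x + dfun y;
  dlin_scal : forall a x, dfun (nscal a x) = a * dfun x;
  dbounded : exists M, forall x, Rabs (dfun x) <= M * nnorm x
}.

Lemma dual_lin_add {X : NormedSpace} (a b : R) (f h : dual X) :
  forall x y, a * f (nadd x y) + b * h (nadd x y) =
              (a * f x + b * h x) + (a * f y + b * h y).
Proof. intros; rewrite !dlin_add; ring. Qed.

Lemma dual_lin_scal {X : NormedSpace} (a b : R) (f h : dual X) :
  forall c x, a * f (nscal c x) + b * h (nscal c x) = c * (a * f x + b * h x).
Proof. intros; rewrite !dlin_scal; ring. Qed.

Lemma dual_lin_bounded {X : NormedSpace} (a b : R) (f h : dual X) :
  exists M, forall x, Rabs (a * f x + b * h x) <= M * nnorm x.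
Proof.
  destruct (dbounded _ f) as [M1 H1]; destruct (dbounded _ h) as [M2 H2].
  exists (Rabs a * M1 + Rabs b * M2); intro x.
  eapply Rle_trans; [apply Rabs_triang|]. rewrite !Rabs_mult.
  specialize (H1 x); specialize (H2 x).
  assert (Rabs a * Rabs (f x) <= Rabs a * (M1 * nnorm x))
    by (apply Rmult_le_compat_l; [apply Rabs_pos|exact H1]).
  assert (Rabs b * Rabs (h x) <= Rabs b * (M2 * nnorm x))
    by (apply Rmult_le_compat_l; [apply Rabs_pos|exact H2]).
  nra.
Qed.

Definition dual_lin {X : NormedSpace} (a b : R) (f h : dual X) : dual X :=
  {| dfun := fun x => a * f x + b * h x;
     dlin_add := dual_lin_add a b f h;
     dlin_scal := dual_lin_scal a b f h;
     dbounded := dual_lin_bounded a b f h |}.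

Definition dual_sub {X : NormedSpace} (f h : dual X) : dual X := dual_lin 1 (-1) f h.

Definition dn_set {X : NormedSpace} (f : dual X) (r : R) : Prop :=
  exists x : X, nnorm x <= 1 /\ r = Rabs (f x).

Lemma dn_bound {X : NormedSpace} (f : dual X) : bound (dn_set f).
Proof.
  destruct (dbounded _ f) as [M HM]. exists (Rmax M 0).
  intros r [x [Hx ->]]. specialize (HM x). pose proof (nnorm_nonneg X x).
  pose proof (Rmax_l M 0). pose proof (Rmax_r M 0). nra.
Qed.

Lemma dn_ne {X : NormedSpace} (f : dual X) : exists r, dn_set f r.
Proof. exists (Rabs (f nzero)), nzero. rewrite nnorm_zero. split; [lra|reflexivity]. Qed.

Definition dual_norm {X : NormedSpace} (f : dual X) : R :=
  proj1_sig (completeness (dn_set f) (dn_bound f) (dn_ne f)).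

Inductive ER := Fin (r : R) | PInf.

Definition ER_le (a b : ER) : Prop :=
  match a, b with
  | _, PInf => True
  | PInf, Fin _ => False
  | Fin x, Fin y => x <= y
  end.

Definition fval (a : ER) : R := match a with Fin r => r | PInf => 0 end.

Definition in_dom {X : NormedSpace} (g : dual X -> ER) (xs : dual X) : Prop :=
  g xs <> PInf.

(* proper: never -oo (built into ER) and nonempty domain *)
Definition proper {X : NormedSpace} (g : dual X -> ER) : Prop :=
  exists xs, in_dom g xs.

Definition convex {X : NormedSpace} (g : dual X -> ER) : Prop :=
  forall (xs ys : dual X) (a b t : R), 0 < t < 1 ->
    g xs = Fin a -> g ys = Fin b ->
    ER_le (g (dual_lin t (1 - t) xs ys)) (Fin (t * a + (1 - t) * b)).

(* weak-star neighbourhood of xs: finitely many points of X and a radius *)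
Definition weak_star_lsc {X : NormedSpace} (g : dual X -> ER) : Prop :=
  forall (xs : dual X) (r : R), ~ ER_le (g xs) (Fin r) ->
    exists (l : list X) (d : R), 0 < d /\
      forall ys : dual X,
        (forall x, In x l -> Rabs (ys x - xs x) < d) -> ~ ER_le (g ys) (Fin r).

Definition eps_subdiff_X {X : NormedSpace} (g : dual X -> ER) (eps : R)
    (xs : dual X) (x : X) : Prop :=
  exists a, g xs = Fin a /\
    forall ys : dual X, ER_le (Fin (ys x - xs x + a - eps)) (g ys).

(* The argument is Brondsted-Rockafellar's, run on the conjugate side (below, [x0s], [xes] and [xe]
   stand for x0^*, x_eps^* and x_eps). On [X], the function [phi = g^* - x0s] is convex, lower
   semicontinuous and bounded below by [- g x0s], and [x0 \in \partial_eps g(x0s)] says that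
   [phi x0 <= - g x0s + eps]. Ekeland's variational principle with slope [sqrt eps] gives [xe] with
   [phi xe + sqrt eps ||xe - x0|| <= phi x0] at which [phi + sqrt eps ||. - xe||] is minimal, and a
   Hahn-Banach separation in [X * R] turns this into [w \in \partial phi(xe)] with [||w|| <= sqrt eps]:
   [xes = x0s + w] is a subgradient of [g^*] at [xe]. Since [g] is convex and weak*-lower
   semicontinuous, it is the supremum of its weak*-continuous affine minorants (a separation in which
   the finitely many points of [X] defining a weak* neighbourhood make the separating functional a
   point of [X]); hence [xe \in \partial g(xes)]. The estimates follow from [||w|| <= sqrt eps],
   [sqrt eps ||xe - x0|| <= eps] and the two subgradient inequalities; they even hold with
   [beta = 0]. *)

From Stdlib Require Import Reals Lra Psatz List.
From Stdlib Require Import Classical ClassicalEpsilon FunctionalExtensionality PropExtensionality.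
From mathcomp Require classical_sets.
Open Scope R_scope.

Lemma Rabs_le_inv x y : Rabs x <= y -> - y <= x <= y.
Proof.
  intro h. pose proof (Rle_abs x). pose proof (Rle_abs (- x)). rewrite Rabs_Ropp in *. lra.
Qed.

Lemma Rabs_m1 : Rabs (-1) = 1.
Proof. rewrite Rabs_left; lra. Qed.

Lemma Rdiv_nonneg a b : 0 <= a -> 0 < b -> 0 <= a / b.
Proof. intros. apply Rmult_le_pos; [|apply Rlt_le, Rinv_0_lt_compat]; auto. Qed.

Lemma Rinf_exists (P : R -> Prop) : (exists a, P a) -> (exists m, forall a, P a -> m <= a) ->
  {m | (forall a, P a -> m <= a) /\ (forall m', (forall a, P a -> m' <= a) -> m' <= m)}.
Proof.
  intros ha hb. destruct (completeness (fun x => P (- x))) as [s [s_ub s_lub]].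
  - destruct hb as [m hm]. exists (- m). intros x hx. specialize (hm _ hx). lra.
  - destruct ha as [a ha]. exists (- a). now rewrite Ropp_involutive.
  - exists (- s). split.
    + intros a hP. assert (- a <= s) by (apply s_ub; now rewrite Ropp_involutive). lra.
    + intros m' hm'. assert (s <= - m') by (apply s_lub; intros x hx; specialize (hm' _ hx); lra).
      lra.
Qed.

(* [Rinf P] is the infimum of [P], and the junk value [0] if [P] is empty or unbounded below. *)
Definition Rinf (P : R -> Prop) : R :=
  match excluded_middle_informative ((exists a, P a) /\ (exists m, forall a, P a -> m <= a)) with
  | left h => proj1_sig (Rinf_exists P (proj1 h) (proj2 h))
  | right _ => 0
  end.

Lemma Rinf_le P : (exists m, forall a, P a -> m <= a) -> forall a, P a -> Rinf P <= a.
Proof.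
  intros hb a ha. unfold Rinf. destruct excluded_middle_informative as [h|h].
  - destruct (Rinf_exists P _ _) as [m [h1 h2]]; simpl; auto.
  - exfalso; apply h; eauto.
Qed.

Lemma Rinf_ge P : (exists a, P a) -> forall m, (forall a, P a -> m <= a) -> m <= Rinf P.
Proof.
  intros he m hm. unfold Rinf. destruct excluded_middle_informative as [h|h].
  - destruct (Rinf_exists P _ _) as [m' [h1 h2]]; simpl; auto.
  - exfalso; apply h; eauto.
Qed.

Lemma pow_half_small e : 0 < e -> exists n : nat, (1 / 2) ^ n < e.
Proof.
  intro he. destruct (pow_lt_1_zero (1 / 2) ltac:(rewrite Rabs_right; lra) e he) as [N hN].
  exists N. specialize (hN N (le_n N)). eapply Rle_lt_trans; [apply Rle_abs|]; auto.
Qed.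

Record VectorSpace := {
  vcarrier :> Type;
  vzero : vcarrier;
  vadd : vcarrier -> vcarrier -> vcarrier;
  vscale : R -> vcarrier -> vcarrier;
  vaddA : forall x y z, vadd x (vadd y z) = vadd (vadd x y) z;
  vaddC : forall x y, vadd x y = vadd y x;
  vadd0 : forall x, vadd x vzero = x;
  vscaleA : forall a b x, vscale a (vscale b x) = vscale (a * b) x;
  vscale1 : forall x, vscale 1 x = x;
  vscaleDr : forall a x y, vscale a (vadd x y) = vadd (vscale a x) (vscale a y);
  vscaleDl : forall a b x, vscale (a + b) x = vadd (vscale a x) (vscale b x);
  vscale0 : forall x, vscale 0 x = vzero
}.
Arguments vzero {_}. Arguments vadd {_}. Arguments vscale {_}.
Arguments vaddA {_}. Arguments vaddC {_}. Arguments vadd0 {_}. Arguments vscaleA {_}.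
Arguments vscale1 {_}. Arguments vscaleDr {_}. Arguments vscaleDl {_}. Arguments vscale0 {_}.

Section VectorSpaceTheory.
Variable V : VectorSpace.

Lemma vscaler0 a : vscale a (@vzero V) = vzero.
Proof. rewrite <- (vscale0 vzero) at 1. rewrite vscaleA, Rmult_0_r. apply vscale0. Qed.

Lemma vadd0l (x : V) : vadd vzero x = x.
Proof. rewrite vaddC. apply vadd0. Qed.

Lemma vaddN (x : V) : vadd x (vscale (-1) x) = vzero.
Proof. rewrite <- (vscale1 x) at 1. rewrite <- vscaleDl, Rplus_opp_r. apply vscale0. Qed.

Lemma vaddIr (x y z : V) : vadd x z = vadd y z -> x = y.
Proof.
  intro H. rewrite <- (vadd0 x), <- (vadd0 y), <- (vaddN z), !vaddA, H. reflexivity.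
Qed.

Definition is_linear (l : V -> R) :=
  (forall x y, l (vadd x y) = l x + l y) /\ (forall a x, l (vscale a x) = a * l x).

Lemma is_linear0 l : is_linear l -> l vzero = 0.
Proof. intros [_ Hl]. rewrite <- (vscale0 vzero), Hl. ring. Qed.

End VectorSpaceTheory.

(* [vring] proves equalities of vector expressions by comparing the coefficient
   of each atom, computed on a reified term. *)
Inductive vterm := VAtom (n : nat) | VZero | VAdd (s t : vterm) | VScale (r : R) (t : vterm).

Section Reflection.
Variable V : VectorSpace.

Fixpoint vterm_eval (env : list V) (t : vterm) : V :=
  match t with
  | VAtom n => nth n env vzero
  | VZero => vzero
  | VAdd s t => vadd (vterm_eval env s) (vterm_eval env t)
  | VScale r t => vscale r (vterm_eval env t)
  end.

Fixpoint vterm_coef (t : vterm) (i : nat) : R :=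
  match t with
  | VAtom n => if Nat.eqb n i then 1 else 0
  | VZero => 0
  | VAdd s t => vterm_coef s i + vterm_coef t i
  | VScale r t => r * vterm_coef t i
  end.

Fixpoint lincomb (env : list V) (c : nat -> R) : V :=
  match env with
  | nil => vzero
  | x :: env => vadd (vscale (c 0%nat) x) (lincomb env (fun i => c (S i)))
  end.

Lemma lincomb_ext env : forall c1 c2,
  (forall i, (i < length env)%nat -> c1 i = c2 i) -> lincomb env c1 = lincomb env c2.
Proof.
  induction env as [|x env IH]; intros c1 c2 Hc; simpl; auto.
  rewrite (Hc 0%nat) by (simpl; lia). f_equal.
  apply IH. intros i Hi. apply Hc. simpl. lia.
Qed.

Lemma lincomb_add env : forall c1 c2,
  lincomb env (fun i => c1 i + c2 i) = vadd (lincomb env c1) (lincomb env c2).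
Proof.
  induction env as [|x env IH]; intros; simpl.
  - now rewrite vadd0.
  - rewrite IH, vscaleDl, <- !vaddA. f_equal. rewrite !vaddA. f_equal. apply vaddC.
Qed.

Lemma lincomb_scale env : forall r c, lincomb env (fun i => r * c i) = vscale r (lincomb env c).
Proof.
  induction env as [|x env IH]; intros; simpl.
  - now rewrite vscaler0.
  - now rewrite IH, vscaleDr, vscaleA.
Qed.

Lemma lincomb_zero env : lincomb env (fun _ => 0) = vzero.
Proof. induction env as [|x env IH]; simpl; auto. now rewrite IH, vscale0, vadd0. Qed.

Lemma lincomb_atom env : forall n,
  lincomb env (fun i => if Nat.eqb n i then 1 else 0) = nth n env vzero.
Proof.
  induction env as [|x env IH]; intros [|n]; simpl; auto.
  - now rewrite vscale1, lincomb_zero, vadd0.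
  - now rewrite vscale0, vadd0l.
Qed.

Lemma vterm_eval_lincomb env t : vterm_eval env t = lincomb env (vterm_coef t).
Proof.
  induction t; simpl.
  - symmetry; apply lincomb_atom.
  - symmetry; apply lincomb_zero.
  - now rewrite IHt1, IHt2, lincomb_add.
  - now rewrite IHt, lincomb_scale.
Qed.

Lemma vterm_eval_eq env s t :
  (forall i, (i < length env)%nat -> vterm_coef s i = vterm_coef t i) ->
  vterm_eval env s = vterm_eval env t.
Proof. intro H. rewrite !vterm_eval_lincomb. now apply lincomb_ext. Qed.

End Reflection.

Ltac vterm_mem x l :=
  match l with nil => constr:(false) | cons x _ => constr:(true) | cons _ ?l => vterm_mem x l end.
Ltac vterm_atoms t l :=
  match t with
  | @vadd _ ?a ?b => let l := vterm_atoms a l in vterm_atoms b l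
  | @vscale _ _ ?a => vterm_atoms a l
  | @vzero _ => l
  | _ => match vterm_mem t l with true => l | false => constr:(cons t l) end
  end.
Ltac vterm_index x l :=
  match l with
  | cons x _ => constr:(0%nat)
  | cons _ ?l => let n := vterm_index x l in constr:(S n)
  end.
Ltac vterm_reify env t :=
  match t with
  | @vadd _ ?a ?b => let s := vterm_reify env a in let u := vterm_reify env b in constr:(VAdd s u)
  | @vscale _ ?r ?a => let s := vterm_reify env a in constr:(VScale r s)
  | @vzero _ => constr:(VZero)
  | _ => let n := vterm_index t env in constr:(VAtom n)
  end.
Ltac vspace_of t :=
  match t with @vadd ?V _ _ => V | @vscale ?V _ _ => V | @vzero ?V => V end.
Ltac vring :=
  match goal with |- ?a = ?b =>
    let V := match constr:((a, b)) with (?a, _) => vspace_of a | (_, ?b) => vspace_of b end in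
    let env := vterm_atoms a (@nil (vcarrier V)) in
    let env := vterm_atoms b env in
    let env := eval simpl in env in
    let s := vterm_reify env a in let t := vterm_reify env b in
    change (vterm_eval V env s = vterm_eval V env t); apply vterm_eval_eq;
    let i := fresh "i" in let Hi := fresh "Hi" in
    intros i Hi; cbn [length] in Hi;
    repeat (destruct i as [|i]; [cbn; ring | apply <- Nat.succ_lt_mono in Hi]);
    exfalso; lia
  end.

(** * The Hahn-Banach extension theorem *)

Section HahnBanach.
Variable V : VectorSpace.
Variable p : V -> R.
Hypothesis p_subadd : forall u w, p (vadd u w) <= p u + p w.
Hypothesis p_homog : forall c u, 0 < c -> p (vscale c u) = c * p u.

(* Partial linear functionals are handled through their graphs, subsets of [V * R]. *)
Record dominated_graph (G : V * R -> Prop) : Prop := {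
  dg_fun : forall v a b, G (v, a) -> G (v, b) -> a = b;
  dg_zero : G (vzero, 0);
  dg_add : forall u a w b, G (u, a) -> G (w, b) -> G (vadd u w, a + b);
  dg_scale : forall c u a, G (u, a) -> G (vscale c u, c * a);
  dg_le : forall u a, G (u, a) -> a <= p u
}.

Lemma extension_value G : dominated_graph G -> forall v, exists al,
  forall s a, G (s, a) -> a + al <= p (vadd s v) /\ a - al <= p (vadd s (vscale (-1) v)).
Proof.
  intros HG v.
  set (S := fun r => exists s a, G (s, a) /\ r = a - p (vadd s (vscale (-1) v))).
  assert (S_le : forall s a r, G (s, a) -> S r -> r <= p (vadd s v) - a).
  { intros s a r hs [s' [a' [hs' ->]]].
    assert (a + a' <= p (vadd s s')) by (apply (dg_le _ HG), (dg_add _ HG); auto).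
    assert (E : vadd s s' = vadd (vadd s v) (vadd s' (vscale (-1) v))) by vring.
    pose proof (p_subadd (vadd s v) (vadd s' (vscale (-1) v))). rewrite <- E in *. lra. }
  destruct (completeness S) as [al [al_ub al_lub]].
  - exists (p (vadd vzero v) - 0). intros r hr. exact (S_le _ _ _ (dg_zero _ HG) hr).
  - exists (0 - p (vadd vzero (vscale (-1) v))), vzero, 0. split; auto. apply (dg_zero _ HG).
  - exists al. intros s a hs. split.
    + assert (al <= p (vadd s v) - a) by (apply al_lub; intros r hr; exact (S_le _ _ _ hs hr)). lra.
    + assert (a - p (vadd s (vscale (-1) v)) <= al) by (apply al_ub; exists s, a; auto). lra.
Qed.

Section OneStep.
Variable G : V * R -> Prop.
Hypothesis HG : dominated_graph G.
Variables (v : V) (al : R).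
Hypothesis v_new : ~ exists a, G (v, a).
Hypothesis al_ok : forall s a, G (s, a) ->
  a + al <= p (vadd s v) /\ a - al <= p (vadd s (vscale (-1) v)).

Definition graph_extension (z : V * R) : Prop :=
  exists s a t, G (s, a) /\ z = (vadd s (vscale t v), a + t * al).

Lemma graph_extension_unique s a t s' a' t' : G (s, a) -> G (s', a') ->
  vadd s (vscale t v) = vadd s' (vscale t' v) -> t = t' /\ s = s'.
Proof.
  intros hs hs' E. destruct (Req_dec t t') as [<-|nt].
  - split; auto. eapply vaddIr; eauto.
  - exfalso. apply v_new. exists (/ (t' - t) * (a + -1 * a')).
    replace v with (vscale (/ (t' - t)) (vadd s (vscale (-1) s'))).
    + apply (dg_scale _ HG), (dg_add _ HG), (dg_scale _ HG); auto.
    + assert (E' : vadd s (vscale (-1) s') = vscale (t' - t) v).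
      { apply (vaddIr _ _ _ (vadd s' (vscale t v))).
        replace (vadd (vadd s (vscale (-1) s')) (vadd s' (vscale t v))) with (vadd s (vscale t v))
          by vring.
        rewrite E. replace (t' - t) with (t' + -1 * t) by ring. vring. }
      rewrite E', vscaleA, Rinv_l, vscale1 by lra. reflexivity.
Qed.

Lemma graph_extension_le s a t : G (s, a) -> a + t * al <= p (vadd s (vscale t v)).
Proof.
  assert (rescale : forall c w b, 0 < c ->
    / c * a + b <= p (vadd (vscale (/ c) s) w) -> a + c * b <= p (vadd s (vscale c w))).
  { intros c w b hc k.
    replace (vadd s (vscale c w)) with (vscale c (vadd (vscale (/ c) s) w))
      by (rewrite vscaleDr, vscaleA, Rinv_r, vscale1 by lra; reflexivity).
    rewrite p_homog by lra. apply (Rmult_le_compat_l c) in k; [|lra].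
    replace (c * (/ c * a + b)) with (a + c * b) in k by (field; lra). exact k. }
  intro hs. destruct (Rtotal_order t 0) as [tn|[->|tp]].
  - replace (a + t * al) with (a + - t * - al) by ring.
    replace (vscale t v) with (vscale (- t) (vscale (-1) v)) by (rewrite vscaleA; f_equal; ring).
    apply rescale; [lra|]. exact (proj2 (al_ok _ _ (dg_scale _ HG (/ - t) _ _ hs))).
  - rewrite vscale0, vadd0, Rmult_0_l, Rplus_0_r. apply (dg_le _ HG); auto.
  - apply rescale; [lra|]. exact (proj1 (al_ok _ _ (dg_scale _ HG (/ t) _ _ hs))).
Qed.

Lemma graph_extension_dominated : dominated_graph graph_extension.
Proof.
  split.
  - intros u b c [s [a [t [hs E]]]] [s' [a' [t' [hs' E']]]].
    injection E as Eu ->. injection E' as Eu' ->.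
    destruct (graph_extension_unique _ _ _ _ _ _ hs hs' (eq_trans (eq_sym Eu) Eu')) as [<- <-].
    now rewrite (dg_fun _ HG _ _ _ hs hs').
  - exists vzero, 0, 0. split; [apply (dg_zero _ HG)|].
    rewrite vscale0, vadd0. f_equal. ring.
  - intros u b w c [s [a [t [hs E]]]] [s' [a' [t' [hs' E']]]].
    injection E as -> ->. injection E' as -> ->.
    exists (vadd s s'), (a + a'), (t + t'). split; [apply (dg_add _ HG); auto|].
    f_equal; [vring|ring].
  - intros c u b [s [a [t [hs E]]]]. injection E as -> ->.
    exists (vscale c s), (c * a), (c * t). split; [apply (dg_scale _ HG); auto|].
    f_equal; [vring|ring].
  - intros u b [s [a [t [hs E]]]]. injection E as -> ->. apply graph_extension_le; auto.
Qed.

Lemma graph_extension_incl z : G z -> graph_extension z.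
Proof.
  destruct z as [u b]. intro h. exists u, b, 0. split; auto.
  rewrite vscale0, vadd0. f_equal. ring.
Qed.

Lemma graph_extension_new : graph_extension (v, al).
Proof.
  exists vzero, 0, 1. split; [apply (dg_zero _ HG)|].
  rewrite vscale1, vadd0l. f_equal. ring.
Qed.

End OneStep.

Variable G0 : V * R -> Prop.
Hypothesis HG0 : dominated_graph G0.

Let with_G0 (A : V * R -> Prop) z := G0 z \/ A z.

(* The Zorn family consists of the sets [A] such that [G0 ∪ A] is a dominated graph;
   adjoining [G0] keeps the union of the empty chain in the family. *)
Lemma dominated_graph_chain_union (F : (V * R -> Prop) -> Prop) :
  (forall A, F A -> dominated_graph (with_G0 A)) ->
  (forall A B, F A -> F B -> (forall z, A z -> B z) \/ (forall z, B z -> A z)) ->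
  dominated_graph (with_G0 (fun z => exists2 A, F A & A z)).
Proof.
  intros HF Htot.
  set (U := with_G0 (fun z => exists2 A, F A & A z)).
  assert (pair_in : forall z z', U z -> U z' -> exists H, dominated_graph H /\
            (forall y, H y -> U y) /\ H z /\ H z').
  { assert (sub : forall A, F A -> forall y, with_G0 A y -> U y).
    { intros A hA y [h|h]; [left|right]; eauto. }
    intros z z' [h|[A hA h]] [h'|[B hB h']].
    - exists G0. refine (conj HG0 (conj _ (conj h h'))). intros y hy. now left.
    - exists (with_G0 B). refine (conj (HF B hB) (conj (sub B hB) _)). split; [now left|now right].
    - exists (with_G0 A). refine (conj (HF A hA) (conj (sub A hA) _)). split; [now right|now left].
    - destruct (Htot A B hA hB) as [AB|BA].
      + exists (with_G0 B). refine (conj (HF B hB) (conj (sub B hB) _)).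
        split; right; auto.
      + exists (with_G0 A). refine (conj (HF A hA) (conj (sub A hA) _)).
        split; right; auto. }
  split.
  - intros v a b h h'. destruct (pair_in _ _ h h') as [H [HH [_ [k k']]]].
    exact (dg_fun _ HH _ _ _ k k').
  - left. apply (dg_zero _ HG0).
  - intros u a w b h h'. destruct (pair_in _ _ h h') as [H [HH [HU [k k']]]].
    apply HU, (dg_add _ HH); auto.
  - intros c u a h. destruct (pair_in _ _ h h) as [H [HH [HU [k _]]]].
    apply HU, (dg_scale _ HH); auto.
  - intros u a h. destruct (pair_in _ _ h h) as [H [HH [_ [k _]]]]. exact (dg_le _ HH _ _ k).
Qed.

Lemma with_G0_absorb A : (forall z, G0 z -> A z) -> with_G0 A = A.
Proof.
  intro h. apply functional_extensionality. intro z.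
  apply propositional_extensionality. unfold with_G0. intuition.
Qed.

Theorem hahn_banach : exists l : V -> R,
  is_linear V l /\ (forall v, l v <= p v) /\ (forall v a, G0 (v, a) -> l v = a).
Proof.
  destruct (@classical_sets.Zorn_bigcup (V * R)%type (fun A => dominated_graph (with_G0 A)))
    as [A [HA Amax]].
  { intros F HF Htot. apply (dominated_graph_chain_union F HF).
    intros A B hA hB. destruct (Htot A B hA hB); auto. }
  assert (total : forall v, exists a, with_G0 A (v, a)).
  { intro v. apply NNPP. intro nv. destruct (extension_value _ HA v) as [al Hal].
    set (B := graph_extension (with_G0 A) v al).
    apply (Amax B).
    - split.
      + intros z hz. apply graph_extension_incl. now right.
      + intro BA. apply nv. exists al. right. apply BA, graph_extension_new; auto.
    - rewrite with_G0_absorb.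
      + apply graph_extension_dominated; auto.
      + intros z hz. apply graph_extension_incl. now left. }
  set (l v := proj1_sig (constructive_indefinite_description _ (total v))).
  assert (l_spec : forall v, with_G0 A (v, l v))
    by (intro v; exact (proj2_sig (constructive_indefinite_description _ (total v)))).
  assert (l_eq : forall v a, with_G0 A (v, a) -> l v = a) by (intros; eapply (dg_fun _ HA); eauto).
  exists l. repeat split.
  - intros x y. apply l_eq, (dg_add _ HA); auto.
  - intros a x. apply l_eq, (dg_scale _ HA); auto.
  - intro v. apply (dg_le _ HA); auto.
  - intros v a h. apply l_eq. now left.
Qed.

End HahnBanach.

(** * Separation of convex sets *)

Section Separation.
Variable V : VectorSpace.
Variable q : V -> R.
Hypothesis q_triangle : forall u w, q (vadd u w) <= q u + q w.
Hypothesis q_scale : forall c u, q (vscale c u) = Rabs c * q u.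
Variables C D : V -> Prop.
Hypothesis C_convex : forall x y t, 0 <= t <= 1 -> C x -> C y ->
  C (vadd (vscale t x) (vscale (1 - t) y)).
Hypothesis D_convex : forall x y t, 0 <= t <= 1 -> D x -> D y ->
  D (vadd (vscale t x) (vscale (1 - t) y)).
Variables (b c0 : V) (d : R).
Hypothesis d_pos : 0 < d.
Hypothesis D_ball : forall w, q w < d -> D (vadd b w).
Hypothesis C_c0 : C c0.
Hypothesis CD_disjoint : forall x, C x -> D x -> False.

Lemma q_zero : q vzero = 0.
Proof. rewrite <- (vscale0 vzero) at 1. rewrite q_scale, Rabs_R0. ring. Qed.

Lemma q_nonneg u : 0 <= q u.
Proof.
  pose proof (q_triangle u (vscale (-1) u)). rewrite vaddN, q_scale, q_zero, Rabs_m1 in H.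
  lra.
Qed.

(* The convex set [K = D - C - (b - c0)] contains the [q]-ball of radius [d] about [0] and misses
   [c0 - b]; its Minkowski gauge is sublinear, is at least [1] at [c0 - b] and at most [1] on [K],
   and Hahn-Banach extends [t (c0 - b) |-> t] below it. *)
Let w0 := vadd c0 (vscale (-1) b).
Let K k := exists x y, D x /\ C y /\ k = vadd (vadd x (vscale (-1) y)) w0.

Lemma K_convex x y t : 0 <= t <= 1 -> K x -> K y -> K (vadd (vscale t x) (vscale (1 - t) y)).
Proof.
  intros ht [x1 [y1 [h1 [h2 ->]]]] [x2 [y2 [k1 [k2 ->]]]].
  exists (vadd (vscale t x1) (vscale (1 - t) x2)), (vadd (vscale t y1) (vscale (1 - t) y2)).
  repeat split; auto. unfold w0. vring.
Qed.

Lemma K_ball k : q k < d -> K k.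
Proof. intro h. exists (vadd b k), c0. repeat split; auto. unfold w0. vring. Qed.

Lemma K_zero : K vzero.
Proof. apply K_ball. rewrite q_zero. lra. Qed.

Lemma K_not_w0 : ~ K w0.
Proof.
  intros [x [y [hx [hy E]]]]. apply (CD_disjoint x); auto.
  replace x with y; auto. apply (vaddIr _ _ _ (vadd w0 (vscale (-1) y))).
  replace (vadd x (vadd w0 (vscale (-1) y))) with (vadd (vadd (vadd x (vscale (-1) y)) w0) vzero)
    by (rewrite vadd0; vring).
  rewrite <- E. vring.
Qed.

Let in_gauge v l := 0 < l /\ K (vscale (/ l) v).
Let gauge v := Rinf (in_gauge v).

Lemma in_gauge_bounded v : exists m, forall a, in_gauge v a -> m <= a.
Proof. exists 0. intros a [h _]. lra. Qed.

Lemma in_gauge_large v l : q v / d < l -> in_gauge v l.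
Proof.
  intro h. assert (0 <= q v / d) by (apply Rdiv_nonneg; [apply q_nonneg|lra]).
  split; [lra|]. apply K_ball. rewrite q_scale, Rabs_right by (left; apply Rinv_0_lt_compat; lra).
  apply Rmult_lt_reg_l with l; [lra|]. rewrite <- Rmult_assoc, Rinv_r, Rmult_1_l by lra.
  apply Rmult_lt_compat_r with (r := d) in h; [|lra]. unfold Rdiv in h.
  rewrite Rmult_assoc, Rinv_l, Rmult_1_r in h by lra. lra.
Qed.

Lemma in_gauge_nonempty v : exists l, in_gauge v l.
Proof. exists (q v / d + 1). apply in_gauge_large. lra. Qed.

Lemma gauge_nonneg v : 0 <= gauge v.
Proof. apply Rinf_ge; [apply in_gauge_nonempty|]. intros a [h _]; lra. Qed.

Lemma gauge_le_q v : gauge v <= q v / d.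
Proof.
  apply Rle_plus_epsilon. intros e he. apply Rinf_le; [apply in_gauge_bounded|].
  apply in_gauge_large. lra.
Qed.

Lemma gauge_homog c v : 0 < c -> gauge (vscale c v) = c * gauge v.
Proof.
  intro hc.
  assert (scale : forall c v l, 0 < c -> in_gauge v l -> in_gauge (vscale c v) (c * l)).
  { clear c v hc. intros c v l hc [hl hk]. split; [nra|].
    rewrite vscaleA. replace (/ (c * l) * c) with (/ l) by (field; lra). exact hk. }
  apply Rle_antisym.
  - assert (gauge (vscale c v) / c <= gauge v).
    { apply Rinf_ge; [apply in_gauge_nonempty|]. intros l hl.
      assert (gauge (vscale c v) <= c * l) by (apply Rinf_le; [apply in_gauge_bounded|auto]).
      apply Rmult_le_reg_l with c; auto. field_simplify; lra. }
    apply Rmult_le_compat_l with (r := c) in H; [|lra].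
    replace (c * (gauge (vscale c v) / c)) with (gauge (vscale c v)) in H by (field; lra). exact H.
  - apply Rinf_ge; [apply in_gauge_nonempty|]. intros l hl.
    assert (gauge v <= / c * l).
    { apply Rinf_le; [apply in_gauge_bounded|].
      replace v with (vscale (/ c) (vscale c v)) by (rewrite vscaleA, Rinv_l, vscale1 by lra; auto).
      apply scale; auto. apply Rinv_0_lt_compat; lra. }
    apply Rmult_le_compat_l with (r := c) in H; [|lra].
    replace (c * (/ c * l)) with l in H by (field; lra). exact H.
Qed.

Lemma gauge_subadd u w : gauge (vadd u w) <= gauge u + gauge w.
Proof.
  assert (sum : forall l1 l2, in_gauge u l1 -> in_gauge w l2 -> gauge (vadd u w) <= l1 + l2).
  { intros l1 l2 [h1 k1] [h2 k2]. apply Rinf_le; [apply in_gauge_bounded|]. split; [lra|].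
    replace (vscale (/ (l1 + l2)) (vadd u w))
      with (vadd (vscale (l1 / (l1 + l2)) (vscale (/ l1) u))
                 (vscale (1 - l1 / (l1 + l2)) (vscale (/ l2) w))).
    - apply K_convex; auto. split.
      + apply Rdiv_nonneg; lra.
      + apply Rmult_le_reg_r with (l1 + l2); [lra|]. field_simplify; lra.
    - rewrite !vscaleA, vscaleDr. f_equal; f_equal; field; lra. }
  assert (gauge (vadd u w) - gauge u <= gauge w).
  { apply Rinf_ge; [apply in_gauge_nonempty|]. intros l2 h2.
    assert (gauge (vadd u w) - l2 <= gauge u).
    { apply Rinf_ge; [apply in_gauge_nonempty|]. intros l1 h1. specialize (sum l1 l2 h1 h2). lra. }
    lra. }
  lra.
Qed.

Lemma gauge_K k : K k -> gauge k <= 1.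
Proof.
  intro h. apply Rinf_le; [apply in_gauge_bounded|]. split; [lra|]. now rewrite Rinv_1, vscale1.
Qed.

Lemma gauge_w0 : 1 <= gauge w0.
Proof.
  apply Rinf_ge; [apply in_gauge_nonempty|]. intros l [hl hk].
  destruct (Rlt_le_dec l 1) as [h|h]; auto. exfalso. apply K_not_w0.
  replace w0 with (vadd (vscale l (vscale (/ l) w0)) (vscale (1 - l) vzero)).
  - apply K_convex; auto; [lra|apply K_zero].
  - now rewrite vscaler0, vadd0, vscaleA, Rinv_r, vscale1 by lra.
Qed.

Lemma w0_nonzero : w0 <> vzero.
Proof. intro h. apply K_not_w0. rewrite h. apply K_zero. Qed.

Lemma line_graph_dominated :
  dominated_graph V gauge (fun z => exists s, z = (vscale s w0, s)).
Proof.
  split.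
  - intros v a a' [s E] [s' E']. injection E as -> ->. injection E' as E' ->.
    apply NNPP. intro n. apply w0_nonzero.
    rewrite <- (vscale1 w0), <- (Rinv_l (s - s')), <- vscaleA by lra.
    replace (vscale (s - s') w0) with (@vzero V); [apply vscaler0|].
    replace (s - s') with (s + -1 * s') by ring.
    rewrite vscaleDl, <- vscaleA, <- E'. now rewrite vaddN.
  - exists 0. now rewrite vscale0.
  - intros u a u' a' [s E] [s' E']. injection E as -> ->. injection E' as -> ->.
    exists (s + s'). now rewrite vscaleDl.
  - intros c u a [s E]. injection E as -> ->. exists (c * s). now rewrite vscaleA.
  - intros u a [s E]. injection E as -> ->. destruct (Rlt_le_dec 0 s) as [h|h].
    + rewrite gauge_homog by auto. pose proof gauge_w0. nra.
    + pose proof (gauge_nonneg (vscale s w0)). lra.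
Qed.

Theorem separation : exists l : V -> R, is_linear V l /\ (forall v, Rabs (l v) <= q v / d) /\
  l b - l c0 = -1 /\ (forall x y, D x -> C y -> l x <= l y).
Proof.
  destruct (hahn_banach V gauge gauge_subadd gauge_homog _ line_graph_dominated)
    as [l [[l_add l_scale] [l_le l_w0]]].
  assert (lw0 : l w0 = 1) by (apply l_w0; exists 1; now rewrite vscale1).
  unfold w0 in lw0. rewrite l_add, l_scale in lw0.
  exists l. repeat split; auto.
  - intro v. apply Rabs_le.
    pose proof (l_le (vscale (-1) v)). pose proof (gauge_le_q (vscale (-1) v)).
    pose proof (l_le v). pose proof (gauge_le_q v).
    rewrite l_scale, q_scale, Rabs_m1 in *. lra.
  - lra.
  - intros x y hx hy. assert (hK : K (vadd (vadd x (vscale (-1) y)) w0)) by (exists x, y; auto).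
    pose proof (gauge_K _ hK). pose proof (l_le (vadd (vadd x (vscale (-1) y)) w0)).
    unfold w0 in *. rewrite !l_add, !l_scale in *. lra.
Qed.

End Separation.

(** * Linear forms dominated by finitely many linear forms *)

Section FiniteRepresentation.
Variable V : VectorSpace.

Fixpoint sum_abs (fs : list (V -> R)) (v : V) : R :=
  match fs with nil => 0 | f :: fs => Rabs (f v) + sum_abs fs v end.

Fixpoint combination (cs : list R) (fs : list (V -> R)) (v : V) : R :=
  match cs, fs with c :: cs, f :: fs => c * f v + combination cs fs v | _, _ => 0 end.

Definition all_linear (fs : list (V -> R)) := forall f, In f fs -> is_linear V f.

Lemma sum_abs_nonneg fs v : 0 <= sum_abs fs v.
Proof. induction fs; simpl; [lra|]. pose proof (Rabs_pos (a v)); lra. Qed.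

Lemma sum_abs_In fs f v : In f fs -> Rabs (f v) <= sum_abs fs v.
Proof.
  induction fs as [|g fs IH]; simpl; [tauto|]. pose proof (sum_abs_nonneg fs v).
  pose proof (Rabs_pos (g v)). intros [->|h]; [lra|]. specialize (IH h). lra.
Qed.

Lemma sum_abs_triangle fs u w : all_linear fs ->
  sum_abs fs (vadd u w) <= sum_abs fs u + sum_abs fs w.
Proof.
  induction fs as [|f fs IH]; intro hl; simpl; [lra|].
  rewrite (proj1 (hl f (or_introl eq_refl))). pose proof (Rabs_triang (f u) (f w)).
  assert (sum_abs fs (vadd u w) <= sum_abs fs u + sum_abs fs w)
    by (apply IH; intros g hg; apply hl; now right).
  lra.
Qed.

Lemma sum_abs_scale fs c u : all_linear fs -> sum_abs fs (vscale c u) = Rabs c * sum_abs fs u.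
Proof.
  induction fs as [|f fs IH]; intro hl; simpl; [ring|].
  rewrite (proj2 (hl f (or_introl eq_refl))), Rabs_mult, IH by (intros g hg; apply hl; now right).
  ring.
Qed.

Lemma combination_linear cs fs : all_linear fs -> is_linear V (combination cs fs).
Proof.
  revert fs. induction cs as [|c cs IH]; intros [|f fs] hl; split; intros; simpl; try ring;
    destruct (hl f (or_introl eq_refl)) as [f_add f_scale];
    destruct (IH fs (fun g h => hl g (or_intror h))) as [c_add c_scale].
  - rewrite f_add, c_add. ring.
  - rewrite f_scale, c_scale. ring.
Qed.

Lemma sum_abs_map_comp fs (h : V -> V) u :
  sum_abs (map (fun g u => g (h u)) fs) u = sum_abs fs (h u).
Proof. induction fs as [|g fs IH]; simpl; [reflexivity|now rewrite IH]. Qed.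

Lemma combination_map_comp cs fs (h : V -> V) u :
  combination cs (map (fun g u => g (h u)) fs) u = combination cs fs (h u).
Proof. revert cs. induction fs as [|g fs IH]; intros [|c cs]; simpl; auto. now rewrite IH. Qed.

(* Projection along [v0] onto the kernel of [f], when [f v0 = 1]. *)
Let proj_ker (f : V -> R) v0 u := vadd u (vscale (- f u) v0).

Lemma linear_proj_ker f h v0 : is_linear V f -> is_linear V h ->
  is_linear V (fun u => h (proj_ker f v0 u)).
Proof.
  unfold proj_ker. intros [f1 f2] [h1 h2]. split.
  - intros x y. rewrite f1, <- h1. f_equal. vring.
  - intros a x. rewrite f2, <- h2. f_equal. vring.
Qed.

(* Induction on the number of forms: if [f v0 = 1], the restriction of [L] to [ker f] is dominated
   by the remaining forms. *)
Lemma dominated_combination_length n : forall fs, length fs = n -> all_linear fs ->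
  forall L, is_linear V L -> (exists M, forall v, Rabs (L v) <= M * sum_abs fs v) ->
  exists cs, forall v, L v = combination cs fs v.
Proof.
  induction n as [|n IH]; intros fs hlen hfs L hL [M hM].
  - destruct fs; [|discriminate]. exists nil. intro v. specialize (hM v). simpl in hM.
    rewrite Rmult_0_r in hM. pose proof (Rabs_pos (L v)).
    destruct (Req_dec (L v) 0) as [h|h]; auto. exfalso. pose proof (Rabs_pos_lt _ h). lra.
  - destruct fs as [|f fs]; [discriminate|]. injection hlen as hlen.
    assert (hf : is_linear V f) by (apply hfs; now left).
    assert (hfs' : all_linear fs) by (intros g hg; apply hfs; now right).
    destruct (classic (exists v1, f v1 <> 0)) as [[v1 hv1]|hz].
    + set (v0 := vscale (/ f v1) v1).
      assert (fv0 : f v0 = 1) by (unfold v0; rewrite (proj2 hf); field; auto).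
      assert (f_proj : forall u, f (proj_ker f v0 u) = 0).
      { intro u. unfold proj_ker. rewrite (proj1 hf), (proj2 hf), fv0. ring. }
      set (fs' := map (fun g u => g (proj_ker f v0 u)) fs).
      destruct (IH fs') with (L := fun u => L (proj_ker f v0 u)) as [cs hcs].
      * unfold fs'. now rewrite length_map.
      * intros g' hg'. apply in_map_iff in hg'. destruct hg' as [g [<- hg]].
        apply linear_proj_ker; auto.
      * apply linear_proj_ker; auto.
      * exists M. intro u. unfold fs'. rewrite sum_abs_map_comp.
        specialize (hM (proj_ker f v0 u)). simpl in hM.
        rewrite f_proj, Rabs_R0, Rplus_0_l in hM. exact hM.
      * exists ((L v0 - combination cs fs v0) :: cs). intro u. simpl.
        assert (E : u = vadd (proj_ker f v0 u) (vscale (f u) v0)) by (unfold proj_ker; vring).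
        assert (L u = L (proj_ker f v0 u) + f u * L v0)
          by (rewrite E at 1; rewrite (proj1 hL), (proj2 hL); auto).
        rewrite H, hcs. unfold fs'. rewrite combination_map_comp. unfold proj_ker at 1.
        destruct (combination_linear cs fs hfs') as [c1 c2]. rewrite c1, c2. ring.
    + destruct (IH fs hlen hfs' L hL) as [cs hcs].
      * exists M. intro u. specialize (hM u). simpl in hM.
        assert (f u = 0) by (apply NNPP; intro; apply hz; eauto).
        rewrite H, Rabs_R0, Rplus_0_l in hM. exact hM.
      * exists (0 :: cs). intro u. simpl. rewrite hcs. ring.
Qed.

Theorem dominated_combination fs L : all_linear fs -> is_linear V L ->
  (exists M, forall v, Rabs (L v) <= M * sum_abs fs v) ->
  exists cs, forall v, L v = combination cs fs v.
Proof. intro hfs. exact (dominated_combination_length (length fs) fs eq_refl hfs L). Qed.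

End FiniteRepresentation.

Definition vspace_prod (V : VectorSpace) : VectorSpace.
Proof.
  refine {| vcarrier := V * R; vzero := (vzero, 0);
            vadd x y := (vadd (fst x) (fst y), snd x + snd y);
            vscale a x := (vscale a (fst x), a * snd x) |};
    intros; repeat match goal with x : (_ * _)%type |- _ => destruct x end; simpl; f_equal;
    auto using vaddA, vaddC, vadd0, vscaleA, vscale1, vscaleDr, vscaleDl, vscale0; ring.
Defined.

Definition vspace_fun (T : Type) : VectorSpace.
Proof.
  refine {| vcarrier := T -> R; vzero _ := 0; vadd f h t := f t + h t; vscale a f t := a * f t |};
    intros; apply functional_extensionality; intros; ring.
Defined.

Section NormedVectorSpace.
Variable X : NormedSpace.

Lemma nscal0 (x : X) : nscal 0 x = nzero.
Proof. apply nnorm_eq0. rewrite nnorm_scal, Rabs_R0. ring. Qed.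

Definition normed_vspace : VectorSpace :=
  {| vcarrier := X; vzero := nzero; vadd := nadd; vscale := nscal;
     vaddA := nadd_assoc X; vaddC := nadd_comm X; vadd0 := nadd_zero X;
     vscaleA := nscal_assoc X; vscale1 := nscal_one X;
     vscaleDr := nscal_distr_v X; vscaleDl := nscal_distr_s X; vscale0 := nscal0 |}.

Lemma nopp_scale (y : X) : nopp y = nscal (-1) y.
Proof.
  apply (vaddIr normed_vspace _ _ y). simpl.
  rewrite (nadd_comm X (nopp y)), nadd_opp, (nadd_comm X (nscal (-1) y)).
  exact (eq_sym (vaddN normed_vspace y)).
Qed.

Lemma vsub_scale (x y : X) : vsub x y = nadd x (nscal (-1) y).
Proof. unfold vsub. now rewrite nopp_scale. Qed.

End NormedVectorSpace.

Ltac nring :=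
  repeat rewrite vsub_scale;
  match goal with
  | |- context [@nadd ?X _ _] =>
      change (@nadd X) with (@vadd (normed_vspace X));
      change (@nscal X) with (@vscale (normed_vspace X));
      change (@nzero X) with (@vzero (normed_vspace X)); vring
  end.

Section NormedSpaceFacts.
Variable X : NormedSpace.

Lemma nnorm_opp (x : X) : nnorm (nscal (-1) x) = nnorm x.
Proof. rewrite nnorm_scal, Rabs_m1. ring. Qed.

Lemma vsub_nnorm_sym (x y : X) : nnorm (vsub x y) = nnorm (vsub y x).
Proof. rewrite <- nnorm_opp. f_equal. nring. Qed.

Lemma vsub_nnorm_triangle (x y z : X) : nnorm (vsub x z) <= nnorm (vsub x y) + nnorm (vsub y z).
Proof. replace (vsub x z) with (nadd (vsub x y) (vsub y z)) by nring. apply nnorm_triangle. Qed.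

Lemma vsub_self (x : X) : vsub x x = nzero.
Proof. nring. Qed.

Lemma vsub_nnorm_eq0 (x y : X) : nnorm (vsub x y) = 0 -> x = y.
Proof.
  intro h. apply nnorm_eq0 in h. replace x with (nadd (vsub x y) y) by nring.
  rewrite h, nadd_comm. apply nadd_zero.
Qed.

Lemma dual0 (f : dual X) : f nzero = 0.
Proof. rewrite <- (nscal0 X nzero), dlin_scal. ring. Qed.

Lemma dual_vsub (f : dual X) u w : f (vsub u w) = f u - f w.
Proof. rewrite vsub_scale, dlin_add, dlin_scal. ring. Qed.

Lemma dual_lipschitz (f : dual X) :
  exists M, 0 <= M /\ forall u w, Rabs (f u - f w) <= M * nnorm (vsub u w).
Proof.
  destruct (dbounded _ f) as [M hM]. exists (Rabs M). split; [apply Rabs_pos|].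
  intros u w. rewrite <- dual_vsub. eapply Rle_trans; [apply hM|].
  apply Rmult_le_compat_r; [apply nnorm_nonneg|apply RRle_abs].
Qed.

Lemma dual_norm_lub (f : dual X) : is_lub (dn_set f) (dual_norm f).
Proof. unfold dual_norm. now destruct completeness. Qed.

Lemma dual_norm_ge (f : dual X) x : nnorm x <= 1 -> Rabs (f x) <= dual_norm f.
Proof. intro h. apply (proj1 (dual_norm_lub f)). now exists x. Qed.

Lemma dual_norm_le (f : dual X) M : (forall x, nnorm x <= 1 -> Rabs (f x) <= M) -> dual_norm f <= M.
Proof. intro h. apply (proj2 (dual_norm_lub f)). intros r [x [hx ->]]. auto. Qed.

Lemma dual_norm_nonneg (f : dual X) : 0 <= dual_norm f.
Proof.
  eapply Rle_trans; [|apply (dual_norm_ge f nzero)]; [apply Rabs_pos|].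
  rewrite nnorm_zero. lra.
Qed.

Lemma dual_norm_bound (f : dual X) x : Rabs (f x) <= dual_norm f * nnorm x.
Proof.
  destruct (Req_dec (nnorm x) 0) as [h|h].
  - apply nnorm_eq0 in h. subst. rewrite dual0, Rabs_R0, nnorm_zero. lra.
  - pose proof (nnorm_nonneg X x). set (n := nnorm x) in *.
    assert (hn : 0 < / n) by (apply Rinv_0_lt_compat; lra).
    assert (nnorm (nscal (/ n) x) <= 1).
    { rewrite nnorm_scal, Rabs_right by lra. fold n. rewrite Rinv_l; lra. }
    pose proof (dual_norm_ge f _ H0) as H1. rewrite dlin_scal, Rabs_mult, Rabs_right in H1 by lra.
    apply (Rmult_le_compat_l n) in H1; [|lra]. rewrite <- Rmult_assoc, Rinv_r in H1 by lra. lra.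
Qed.

End NormedSpaceFacts.

(** * Ekeland's variational principle *)

Section Ekeland.
Variable X : NormedSpace.
Hypothesis X_complete : complete X.
Variables (D : X -> Prop) (f : X -> R) (lam m0 : R).
Hypothesis lam_pos : 0 < lam.
Hypothesis f_lb : forall x, D x -> m0 <= f x.
Hypothesis f_lsc : forall y m,
  (forall e, 0 < e -> exists y', nnorm (vsub y' y) < e /\ D y' /\ f y' <= m + e) -> D y /\ f y <= m.
Variable x0 : X.
Hypothesis D_x0 : D x0.

Definition below x y := D y /\ f y + lam * nnorm (vsub y x) <= f x.

Lemma below_refl x : D x -> below x x.
Proof. intro h. split; auto. rewrite vsub_self, nnorm_zero. lra. Qed.

Lemma below_trans x y z : below x y -> below y z -> below x z.
Proof.
  intros [h1 h2] [k1 k2]. split; auto. pose proof (vsub_nnorm_triangle X z y x).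
  assert (lam * nnorm (vsub z x) <= lam * (nnorm (vsub z y) + nnorm (vsub y x)))
    by (apply Rmult_le_compat_l; lra). lra.
Qed.

Lemma below_closed x y m :
  (forall e, 0 < e -> exists y',
     nnorm (vsub y' y) < e /\ D y' /\ f y' + lam * nnorm (vsub y' x) <= m) ->
  D y /\ f y + lam * nnorm (vsub y x) <= m.
Proof.
  intro h. cut (D y /\ f y <= m - lam * nnorm (vsub y x)); [intros [? ?]; split; auto; lra|].
  apply f_lsc. intros e he.
  destruct (h (Rmin e (e / lam))) as [y' [hy' [hD hf]]].
  { apply Rmin_pos; [|apply Rdiv_lt_0_compat]; auto. }
  pose proof (Rmin_l e (e / lam)). pose proof (Rmin_r e (e / lam)).
  exists y'. repeat split; auto; [lra|].
  pose proof (vsub_nnorm_triangle X y y' x). rewrite (vsub_nnorm_sym X y y') in H1.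
  assert (lam * nnorm (vsub y' y) <= lam * (e / lam)) by (apply Rmult_le_compat_l; lra).
  replace (lam * (e / lam)) with e in H2 by (field; lra).
  assert (lam * nnorm (vsub y x) <= lam * (nnorm (vsub y' y) + nnorm (vsub y' x)))
    by (apply Rmult_le_compat_l; lra).
  lra.
Qed.

Definition inf_below x := Rinf (fun r => exists y, below x y /\ r = f y).

Lemma inf_below_le x y : below x y -> inf_below x <= f y.
Proof.
  intro h. apply Rinf_le; [|eauto]. exists m0. intros r [y' [[hD _] ->]]. auto.
Qed.

Lemma near_inf_below x n : D x -> exists y, below x y /\ f y <= inf_below x + (1 / 2) ^ n.
Proof.
  intro hx. apply NNPP. intro hn.
  assert (inf_below x + (1 / 2) ^ n <= inf_below x).
  { apply Rinf_ge; [exists (f x), x; split; auto; apply below_refl; auto|].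
    intros r [y [hy ->]]. apply NNPP. intro k. apply hn. exists y. split; auto. lra. }
  pose proof (pow_lt (1 / 2) n ltac:(lra)). lra.
Qed.

Definition next_point (n : nat) (x : {x : X | D x}) : {x : X | D x} :=
  let (y, hy) :=
    constructive_indefinite_description _ (near_inf_below (proj1_sig x) n (proj2_sig x)) in
  exist _ y (proj1 (proj1 hy)).

Lemma next_point_spec n x : below (proj1_sig x) (proj1_sig (next_point n x)) /\
  f (proj1_sig (next_point n x)) <= inf_below (proj1_sig x) + (1 / 2) ^ n.
Proof. unfold next_point. now destruct constructive_indefinite_description. Qed.

Fixpoint ekeland_seq_sig (n : nat) : {x : X | D x} :=
  match n with O => exist _ x0 D_x0 | S n => next_point n (ekeland_seq_sig n) end.

Definition ekeland_seq n := proj1_sig (ekeland_seq_sig n).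

Lemma ekeland_seq_below n k : below (ekeland_seq n) (ekeland_seq (n + k)).
Proof.
  induction k.
  - rewrite Nat.add_0_r. apply below_refl. exact (proj2_sig (ekeland_seq_sig n)).
  - eapply below_trans; eauto. rewrite Nat.add_succ_r. apply next_point_spec.
Qed.

(* Everything below [x_(n+1)] is within [(1/2)^n / lam] of it, since [f (x_(n+1))] is
   [(1/2)^n]-close to the infimum of [f] on the cone of [x_n]. *)
Lemma below_ekeland_seq_close n y :
  below (ekeland_seq (S n)) y -> nnorm (vsub y (ekeland_seq (S n))) <= (1 / 2) ^ n / lam.
Proof.
  intro h. destruct (next_point_spec n (ekeland_seq_sig n)) as [h1 h2].
  pose proof (inf_below_le _ _ (below_trans _ _ _ h1 h)). destruct h as [_ h].
  change (proj1_sig (next_point n (ekeland_seq_sig n))) with (ekeland_seq (S n)) in *.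
  apply Rmult_le_reg_l with lam; auto. replace (lam * ((1 / 2) ^ n / lam)) with ((1 / 2) ^ n)
    by (field; lra).
  change (proj1_sig (ekeland_seq_sig n)) with (ekeland_seq n) in *. lra.
Qed.

Lemma ekeland_seq_close n m : (S n <= m)%nat ->
  nnorm (vsub (ekeland_seq m) (ekeland_seq (S n))) <= (1 / 2) ^ n / lam.
Proof.
  intro h. apply below_ekeland_seq_close. replace m with (S n + (m - S n))%nat by lia.
  apply ekeland_seq_below.
Qed.

Lemma pow_half_div_small e : 0 < e -> exists n : nat, (1 / 2) ^ n / lam < e.
Proof.
  intro he. destruct (pow_half_small (e * lam)) as [n hn]; [nra|].
  exists n. apply Rmult_lt_reg_r with lam; auto. unfold Rdiv. rewrite Rmult_assoc, Rinv_l; lra.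
Qed.

Lemma ekeland_seq_cauchy : forall e, 0 < e -> exists N, forall m k, (N <= m)%nat -> (N <= k)%nat ->
  nnorm (vsub (ekeland_seq m) (ekeland_seq k)) < e.
Proof.
  intros e he. destruct (pow_half_div_small (e / 2)) as [n hn]; [lra|].
  exists (S n). intros m k hm hk.
  pose proof (ekeland_seq_close n m hm). pose proof (ekeland_seq_close n k hk).
  pose proof (vsub_nnorm_triangle X (ekeland_seq m) (ekeland_seq (S n)) (ekeland_seq k)).
  rewrite (vsub_nnorm_sym X (ekeland_seq (S n))) in H1. lra.
Qed.

Theorem ekeland : exists xb, D xb /\ f xb + lam * nnorm (vsub xb x0) <= f x0 /\
  forall y, D y -> f xb <= f y + lam * nnorm (vsub y xb).
Proof.
  destruct (X_complete ekeland_seq ekeland_seq_cauchy) as [xb hxb].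
  assert (below_xb : forall n, below (ekeland_seq n) xb).
  { intro n. apply below_closed. intros e he. destruct (hxb e he) as [N hN].
    exists (ekeland_seq (n + N)). split; [apply hN; lia|]. apply ekeland_seq_below. }
  assert (uniq : forall y, below xb y -> y = xb).
  { intros y hy. apply vsub_nnorm_eq0, Rle_antisym; [|apply nnorm_nonneg].
    apply Rle_plus_epsilon. intros e he.
    destruct (pow_half_div_small (e / 3)) as [n hn]; [lra|].
    destruct (hxb (e / 3) ltac:(lra)) as [N hN].
    pose proof (below_ekeland_seq_close n y (below_trans _ _ _ (below_xb (S n)) hy)).
    pose proof (hN (S n + N)%nat ltac:(lia)). pose proof (ekeland_seq_close n (S n + N) ltac:(lia)).
    pose proof (vsub_nnorm_triangle X y (ekeland_seq (S n)) xb).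
    pose proof (vsub_nnorm_triangle X (ekeland_seq (S n)) (ekeland_seq (S n + N)) xb).
    rewrite (vsub_nnorm_sym X (ekeland_seq (S n)) (ekeland_seq (S n + N))) in H3. lra. }
  destruct (below_xb 0%nat) as [hD h0]. exists xb. repeat split; auto.
  intros y hy. apply Rnot_lt_le. intro hn.
  assert (E : y = xb) by (apply uniq; split; auto; lra).
  subst y. rewrite vsub_self, nnorm_zero in hn. lra.
Qed.

End Ekeland.

(** * Subgradients at Ekeland points *)

Definition dual_of {X : NormedSpace} (l : X -> R) (hl : is_linear (normed_vspace X) l)
  (hb : exists M, forall x, Rabs (l x) <= M * nnorm x) : dual X :=
  {| dfun := l; dlin_add := proj1 hl; dlin_scal := proj2 hl; dbounded := hb |}.

Section Subgradient.
Variable X : NormedSpace.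
Variables (D : X -> Prop) (f : X -> R) (lam : R) (xb : X).
Hypothesis lam_pos : 0 < lam.
Hypothesis f_convex : forall x y t, 0 <= t <= 1 -> D x -> D y ->
  D (nadd (nscal t x) (nscal (1 - t) y)) /\
  f (nadd (nscal t x) (nscal (1 - t) y)) <= t * f x + (1 - t) * f y.
Hypothesis D_xb : D xb.
Hypothesis xb_min : forall y, D y -> f xb <= f y + lam * nnorm (vsub y xb).

Let V := vspace_prod (normed_vspace X).
Let epi (v : V) := D (nadd xb (fst v)) /\ f (nadd xb (fst v)) - f xb <= snd v.
Let cone (v : V) := snd v < - lam * nnorm (fst v).
Let pt (u : X) (t : R) : V := (u, t).

Lemma epi_convex x y t : 0 <= t <= 1 -> epi x -> epi y ->
  epi (vadd (vscale t x) (vscale (1 - t) y)).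
Proof.
  destruct x as [u1 t1], y as [u2 t2]. intros ht [k1 k2] [m1 m2]. unfold epi in *. simpl in *.
  replace (nadd xb (nadd (nscal t u1) (nscal (1 - t) u2)))
    with (nadd (nscal t (nadd xb u1)) (nscal (1 - t) (nadd xb u2))) by nring.
  destruct (f_convex _ _ t ht k1 m1) as [hD hf]. split; auto.
  assert (t * f (nadd xb u1) <= t * (f xb + t1)) by (apply Rmult_le_compat_l; lra).
  assert ((1 - t) * f (nadd xb u2) <= (1 - t) * (f xb + t2)) by (apply Rmult_le_compat_l; lra).
  lra.
Qed.

Lemma cone_convex x y t : 0 <= t <= 1 -> cone x -> cone y ->
  cone (vadd (vscale t x) (vscale (1 - t) y)).
Proof.
  destruct x as [u1 t1], y as [u2 t2]. intros ht k1 k2. unfold cone in *. simpl in *.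
  pose proof (nnorm_triangle X (nscal t u1) (nscal (1 - t) u2)).
  rewrite !nnorm_scal, !Rabs_right in H by lra.
  assert (lam * nnorm (nadd (nscal t u1) (nscal (1 - t) u2))
          <= lam * (t * nnorm u1 + (1 - t) * nnorm u2)) by (apply Rmult_le_compat_l; lra).
  destruct (Rlt_le_dec 0 t) as [tp|t0].
  - assert (t * (t1 + lam * nnorm u1) < 0)
      by (replace 0 with (t * 0) by ring; apply Rmult_lt_compat_l; lra).
    assert ((1 - t) * (t2 + lam * nnorm u2) <= 0)
      by (replace 0 with ((1 - t) * 0) by ring; apply Rmult_le_compat_l; lra).
    lra.
  - replace t with 0 in * by lra. lra.
Qed.

Lemma subgradient_separation : exists al : X -> R, is_linear (normed_vspace X) al /\
  forall u t u' t', cone (pt u t) -> epi (pt u' t') -> al u + t <= al u' + t'.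
Proof.
  set (q := fun v : V => nnorm (fst v) + Rabs (snd v)).
  set (d := / (1 + lam)).
  assert (d_pos : 0 < d) by (apply Rinv_0_lt_compat; lra).
  destruct (separation V q) with (C := epi) (D := cone) (b := pt nzero (-1)) (c0 := pt nzero 0) (d := d)
    as [l [[l_add l_scale] [_ [l_b l_sep]]]].
  - intros [u t] [u' t']. unfold q; simpl.
    pose proof (nnorm_triangle X u u'). pose proof (Rabs_triang t t'). lra.
  - intros c [u t]. unfold q; simpl. rewrite nnorm_scal, Rabs_mult. ring.
  - apply epi_convex.
  - apply cone_convex.
  - exact d_pos.
  - intros [u t] hq. unfold cone, q in *; simpl in *. rewrite (nadd_comm X nzero u), nadd_zero.
    pose proof (Rle_abs t). pose proof (nnorm_nonneg X u). pose proof (Rabs_pos t).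
    assert ((1 + lam) * d = 1) by (unfold d; field; lra).
    assert ((1 + lam) * (nnorm u + Rabs t) < (1 + lam) * d) by (apply Rmult_lt_compat_l; lra).
    assert (lam * nnorm u <= (1 + lam) * nnorm u) by nra.
    assert (Rabs t <= (1 + lam) * Rabs t) by nra.
    lra.
  - unfold epi; simpl. rewrite nadd_zero. split; auto. lra.
  - intros [u t] [k1 k2] k3. unfold epi, cone in *; simpl in *. specialize (xb_min _ k1).
    replace (vsub (nadd xb u) xb) with u in xb_min by nring. lra.
  - set (al u := l (pt u 0)).
    assert (l_split : forall u t, l (pt u t) = al u + t * l (pt nzero 1)).
    { intros u t. unfold al. rewrite <- l_scale, <- l_add. f_equal. unfold pt. simpl.
      f_equal; [nring|ring]. }
    rewrite (l_split nzero (-1)), (l_split nzero 0) in l_b.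
    assert (al0 : al nzero = 0) by (apply (is_linear0 V (fun v => l v)); split; auto).
    exists al. split; [split|].
    + intros x y. unfold al. rewrite <- l_add. simpl. now rewrite Rplus_0_r.
    + intros c x. unfold al. rewrite <- l_scale. simpl. now rewrite Rmult_0_r.
    + intros u t u' t' h1 h2. specialize (l_sep _ _ h1 h2).
      rewrite (l_split u t), (l_split u' t') in l_sep.
      rewrite al0 in l_b. replace (l (pt nzero 1)) with 1 in l_sep by lra. lra.
Qed.

Theorem ekeland_subgradient : exists w : dual X, (forall u, Rabs (w u) <= lam * nnorm u) /\
  forall y, D y -> f xb + w (vsub y xb) <= f y.
Proof.
  destruct subgradient_separation as [al [al_lin al_sep]].
  assert (al0 : al nzero = 0) by exact (is_linear0 _ _ al_lin).
  assert (al_le : forall u, al u <= lam * nnorm u).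
  { intro u. apply Rle_plus_epsilon. intros e he.
    specialize (al_sep u (- lam * nnorm u - e) nzero 0). rewrite al0 in al_sep.
    assert (cone (pt u (- lam * nnorm u - e))) by (unfold cone; simpl; lra).
    assert (epi (pt nzero 0)) by (unfold epi; simpl; rewrite nadd_zero; split; auto; lra).
    specialize (al_sep H H0). lra. }
  assert (al_abs : forall u, Rabs (- al u) <= lam * nnorm u).
  { intro u. rewrite Rabs_Ropp. apply Rabs_le. pose proof (al_le (nscal (-1) u)).
    assert (al (nscal (-1) u) = -1 * al u) by exact (proj2 al_lin (-1) u).
    rewrite nnorm_opp in H. pose proof (al_le u). lra. }
  assert (w_lin : is_linear (normed_vspace X) (fun u => - al u)).
  { destruct al_lin as [h1 h2]. split; intros; cbv beta; [rewrite h1|rewrite h2]; ring. }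
  exists (dual_of _ w_lin (ex_intro _ lam al_abs)). split; [exact al_abs|].
  intros y hy. simpl. apply Rle_plus_epsilon. intros e he.
  specialize (al_sep nzero (- e) (vsub y xb) (f y - f xb)). rewrite al0 in al_sep.
  assert (cone (pt nzero (- e))) by (unfold cone; simpl; rewrite nnorm_zero; lra).
  assert (epi (pt (vsub y xb) (f y - f xb))).
  { unfold epi; simpl. replace (nadd xb (vsub y xb)) with y by nring. split; auto; lra. }
  specialize (al_sep H H0). lra.
Qed.

End Subgradient.

(** * Affine minorants of weak*-lower semicontinuous convex functions *)

Definition evals {X : NormedSpace} (l : list X) : list (vspace_fun X -> R) :=
  map (fun x (h : vspace_fun X) => h x) l.

Lemma In_evals {X : NormedSpace} (l : list X) x :
  In x l -> In (fun h : vspace_fun X => h x) (evals l).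
Proof. apply (in_map (fun x (h : vspace_fun X) => h x)). Qed.

Lemma evals_linear {X : NormedSpace} (l : list X) : all_linear _ (evals l).
Proof.
  intros f hf. apply in_map_iff in hf. destruct hf as [x [<- _]]. split; intros; simpl; ring.
Qed.

Fixpoint lincomb_list {X : NormedSpace} (cs : list R) (l : list X) : X :=
  match cs, l with c :: cs, x :: l => nadd (nscal c x) (lincomb_list cs l) | _, _ => nzero end.

Lemma combination_evals {X : NormedSpace} (z : dual X) cs l :
  combination _ cs (evals l) (dfun X z) = z (lincomb_list cs l).
Proof.
  revert l. induction cs as [|c cs IH]; intros [|x l]; simpl; try (rewrite dual0; auto).
  now rewrite dlin_add, dlin_scal, IH.
Qed.

Section AffineMinorant.
Variables (X : NormedSpace) (g : dual X -> ER).
Hypothesis g_convex : convex g.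
Variables (z0 : dual X) (c0 : R).
Hypothesis g_z0 : g z0 = Fin c0.
Variables (x1 : X) (kappa : R).
Hypothesis g_minorant : forall z c, g z = Fin c -> z x1 - kappa <= c.
Variables (ys : dual X) (r0 d : R) (l : list X).
Hypothesis d_pos : 0 < d.
Hypothesis g_box : forall z c, g z = Fin c ->
  (forall x, In x l -> Rabs (z x - ys x) < d) -> r0 + d <= c.

Let V := vspace_prod (vspace_fun X).
Let pt (h : X -> R) (t : R) : V := (h, t).
Let q (v : V) := sum_abs _ (evals l) (fst v) + Rabs (snd v).
Let epigraph (v : V) := exists z c, g z = Fin c /\ c <= snd v /\ fst v = dfun X z.
Let box (v : V) := q (vadd v (vscale (-1) (pt ys r0))) < d.
Let dz := @vadd (vspace_fun X) z0 (@vscale (vspace_fun X) (-1) ys).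
Let spread := sum_abs _ (evals l) dz.

Lemma weak_seminorm_triangle u w : q (vadd u w) <= q u + q w.
Proof.
  destruct u as [u t], w as [u' t']. unfold q; simpl.
  pose proof (sum_abs_triangle _ (evals l) u u' (evals_linear l)). pose proof (Rabs_triang t t').
  simpl in H. lra.
Qed.

Lemma weak_seminorm_scale c u : q (vscale c u) = Rabs c * q u.
Proof.
  destruct u as [u t]. unfold q; simpl.
  pose proof (sum_abs_scale _ (evals l) c u (evals_linear l)). simpl in H.
  rewrite H, Rabs_mult. ring.
Qed.

Lemma epigraph_convex x y t : 0 <= t <= 1 -> epigraph x -> epigraph y ->
  epigraph (vadd (vscale t x) (vscale (1 - t) y)).
Proof.
  destruct x as [u1 t1], y as [u2 t2]. intros ht [z1 [c1 [k1 [k2 k3]]]] [z2 [c2 [m1 [m2 m3]]]].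
  simpl in *. subst u1 u2.
  assert (epi_pt : forall z c, g z = Fin c -> c <= t * t1 + (1 - t) * t2 ->
    (forall x, z x = t * z1 x + (1 - t) * z2 x) ->
    epigraph (@vadd V (@vscale V t (pt z1 t1)) (@vscale V (1 - t) (pt z2 t2)))).
  { intros z c hz hc hzx. exists z, c. simpl. repeat split; auto.
    apply functional_extensionality. intro x. now rewrite hzx. }
  destruct (Req_dec t 1) as [->|t1'].
  - apply (epi_pt z1 c1); auto; [nra|intro; ring].
  - destruct (Req_dec t 0) as [->|t0].
    + apply (epi_pt z2 c2); auto; [nra|intro; ring].
    + pose proof (g_convex z1 z2 c1 c2 t ltac:(lra) k1 m1) as hc.
      destruct (g (dual_lin t (1 - t) z1 z2)) as [cc|] eqn:ec; simpl in hc; [|contradiction].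
      apply (epi_pt _ cc ec); [|intro; reflexivity].
      assert (t * c1 <= t * t1) by (apply Rmult_le_compat_l; lra).
      assert ((1 - t) * c2 <= (1 - t) * t2) by (apply Rmult_le_compat_l; lra). lra.
Qed.

Lemma box_convex x y t : 0 <= t <= 1 -> box x -> box y ->
  box (vadd (vscale t x) (vscale (1 - t) y)).
Proof.
  intros ht hx hy. unfold box in *.
  replace (vadd (vadd (vscale t x) (vscale (1 - t) y)) (vscale (-1) (pt ys r0)))
    with (vadd (vscale t (vadd x (vscale (-1) (pt ys r0))))
               (vscale (1 - t) (vadd y (vscale (-1) (pt ys r0))))) by vring.
  eapply Rle_lt_trans; [apply weak_seminorm_triangle|].
  rewrite !weak_seminorm_scale, !Rabs_right by lra.
  destruct (Req_dec t 0) as [->|t0]; [lra|].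
  assert (t * q (vadd x (vscale (-1) (pt ys r0))) < t * d) by (apply Rmult_lt_compat_l; lra).
  assert ((1 - t) * q (vadd y (vscale (-1) (pt ys r0))) <= (1 - t) * d)
    by (apply Rmult_le_compat_l; lra).
  lra.
Qed.

Lemma box_epigraph_disjoint v : epigraph v -> box v -> False.
Proof.
  destruct v as [h t]. intros [z [c [k1 [k2 k3]]]] hb. simpl in *. subst h.
  unfold box, q in hb. simpl in hb.
  assert (near : forall x, In x l -> Rabs (z x - ys x) < d).
  { intros x hx. pose proof (sum_abs_In _ (evals l) (fun h => h x) (fun t0 => z t0 + -1 * ys t0)
      (In_evals l x hx)). simpl in H. pose proof (Rabs_pos (t + -1 * r0)).
    replace (z x - ys x) with (z x + -1 * ys x) by ring. lra. }
  pose proof (g_box z c k1 near). pose proof (Rle_abs (t + -1 * r0)).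
  pose proof (sum_abs_nonneg _ (evals l) (fun t0 => z t0 + -1 * ys t0)). lra.
Qed.

Lemma box_epigraph_separation : exists (xl : X) (beta : R),
  z0 xl + c0 * beta = ys xl + r0 * beta + 1 /\
  forall z c t s, g z = Fin c -> c <= t -> 0 <= s -> s * spread < d ->
    ys xl + s * (z0 xl - ys xl) + r0 * beta <= z xl + t * beta.
Proof.
  destruct (separation V q weak_seminorm_triangle weak_seminorm_scale epigraph box
    epigraph_convex box_convex (pt ys r0) (pt z0 c0) d d_pos)
    as [L [[L_add L_scale] [L_bound [L_b L_sep]]]].
  - intros w hw. unfold box.
    replace (vadd (vadd (pt ys r0) w) (vscale (-1) (pt ys r0))) with w by vring. exact hw.
  - exists z0, c0. simpl. repeat split; auto. lra.
  - intros v hv hb. exact (box_epigraph_disjoint v hv hb).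
  - set (LL h := L (pt h 0)).
    set (beta := L (pt (fun _ => 0) 1)).
    assert (L_split : forall h t, L (pt h t) = LL h + t * beta).
    { intros h t. unfold LL, beta. rewrite <- L_scale, <- L_add. f_equal. unfold pt. simpl.
      f_equal; [apply functional_extensionality; intro|]; ring. }
    assert (LL_lin : is_linear (vspace_fun X) LL).
    { split; intros; unfold LL; [rewrite <- L_add|rewrite <- L_scale]; f_equal; unfold pt; simpl;
        f_equal; ring. }
    destruct (dominated_combination _ (evals l) LL (evals_linear l) LL_lin) as [cs hcs].
    { exists (/ d). intro h. pose proof (L_bound (pt h 0)). unfold q, pt in H. simpl in H.
      rewrite Rabs_R0, Rplus_0_r in H. unfold LL, pt. rewrite Rmult_comm. exact H. }
    set (xl := lincomb_list cs l).
    assert (LL_z : forall z : dual X, LL (dfun X z) = z xl)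
      by (intro z; rewrite hcs; apply combination_evals).
    exists xl, beta. split.
    + rewrite !L_split, !LL_z in L_b. lra.
    + intros z c t s hz hc hs hsd.
      set (h := @vadd (vspace_fun X) ys (vscale s dz)).
      assert (hbox : box (pt h r0)).
      { unfold box. replace (vadd (pt h r0) (vscale (-1) (pt ys r0))) with (pt (vscale s dz) 0)
          by (unfold h, pt; simpl; f_equal; [apply functional_extensionality; intro|]; ring).
        unfold q, pt; cbn [fst snd]. rewrite Rabs_R0, Rplus_0_r.
        rewrite (sum_abs_scale _ (evals l) s dz (evals_linear l)), Rabs_right by lra. exact hsd. }
      assert (hepi : epigraph (pt z t)) by (exists z, c; auto).
      pose proof (L_sep _ _ hbox hepi) as hL. rewrite !L_split in hL.
      unfold h, dz in hL. destruct LL_lin as [LL_add LL_scale].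
      rewrite LL_add, LL_scale, LL_add, LL_scale, !LL_z in hL. lra.
Qed.

Section Slope.
Variables (xl : X) (beta : R).
Hypothesis sep_b : z0 xl + c0 * beta = ys xl + r0 * beta + 1.
Hypothesis sep : forall z c t s, g z = Fin c -> c <= t -> 0 <= s -> s * spread < d ->
  ys xl + s * (z0 xl - ys xl) + r0 * beta <= z xl + t * beta.

Lemma sep_at_b z c t : g z = Fin c -> c <= t -> ys xl + r0 * beta <= z xl + t * beta.
Proof.
  intros hz hc. pose proof (sep z c t 0 hz hc (Rle_refl 0)) as h.
  rewrite !Rmult_0_l, Rplus_0_r in h. apply h. lra.
Qed.

Lemma separation_slope_nonneg : 0 <= beta.
Proof.
  apply Rnot_lt_le. intro hb. set (T := 2 / - beta).
  assert (hT : 0 < T) by (apply Rdiv_lt_0_compat; lra).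
  assert (TB : T * beta = -2) by (unfold T; field; lra).
  pose proof (sep_at_b z0 c0 (c0 + T) g_z0 ltac:(lra)) as h.
  rewrite Rmult_plus_distr_r, TB in h. lra.
Qed.

Lemma minorant_of_slope_pos r : 0 < beta -> r < r0 ->
  exists x alpha, (forall z c, g z = Fin c -> z x - alpha <= c) /\ r < ys x - alpha.
Proof.
  intros hb hr. exists (nscal (- / beta) xl), (ys (nscal (- / beta) xl) - r0). split; [|lra].
  intros z c hz. rewrite !dlin_scal. pose proof (sep_at_b z c c hz (Rle_refl c)).
  apply Rmult_le_reg_r with beta; auto.
  replace ((- / beta * z xl - (- / beta * ys xl - r0)) * beta) with (ys xl - z xl + r0 * beta)
    by (field; lra).
  lra.
Qed.

(* A vertical separating hyperplane gives a uniform margin [s] for [z xl] on the domain of [g];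
   adding a large multiple of it to the affine minorant [(x1, kappa)] lifts that minorant above [r]. *)
Lemma minorant_of_vertical r : beta = 0 ->
  exists x alpha, (forall z c, g z = Fin c -> z x - alpha <= c) /\ r < ys x - alpha.
Proof.
  intro hb0. rewrite hb0 in sep_b, sep.
  pose proof (sum_abs_nonneg _ (evals l) dz) as hsp. fold spread in hsp.
  set (s := d / (2 * (spread + 1))).
  assert (hs : 0 < s) by (apply Rdiv_lt_0_compat; lra).
  assert (hsd : s * spread < d).
  { assert (s * (spread + 1) = d / 2) by (unfold s; field; lra).
    assert (s * spread <= s * (spread + 1)) by (apply Rmult_le_compat_l; lra). lra. }
  assert (margin : forall z c, g z = Fin c -> ys xl + s <= z xl).
  { intros z c hz. pose proof (sep z c c s hz (Rle_refl c) (Rlt_le _ _ hs) hsd).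
    replace (z0 xl - ys xl) with 1 in H by lra. lra. }
  set (M := (Rabs r + Rabs (ys x1 - kappa) + 1) / s).
  assert (hM : 0 < M) by (apply Rdiv_lt_0_compat; auto; pose proof (Rabs_pos r);
    pose proof (Rabs_pos (ys x1 - kappa)); lra).
  exists (nadd x1 (nscal (- M) xl)), (kappa - M * (ys xl + s)). rewrite !dlin_add, !dlin_scal. split.
  - intros z c hz. rewrite dlin_add, dlin_scal.
    pose proof (margin z c hz). pose proof (g_minorant z c hz).
    assert (M * (ys xl + s) <= M * z xl) by (apply Rmult_le_compat_l; lra). lra.
  - assert (M * s = Rabs r + Rabs (ys x1 - kappa) + 1) by (unfold M; field; lra).
    pose proof (Rle_abs r). pose proof (Rle_abs (- (ys x1 - kappa))). rewrite Rabs_Ropp in *. lra.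
Qed.

End Slope.

Theorem affine_minorant_above r : r < r0 ->
  exists x alpha, (forall z c, g z = Fin c -> z x - alpha <= c) /\ r < ys x - alpha.
Proof.
  intro hr. destruct box_epigraph_separation as [xl [beta [sep_b sep]]].
  destruct (Rle_lt_or_eq_dec 0 beta (separation_slope_nonneg xl beta sep_b sep)) as [hb|hb].
  - exact (minorant_of_slope_pos xl beta sep r hb hr).
  - exact (minorant_of_vertical xl beta sep_b sep r (eq_sym hb)).
Qed.

End AffineMinorant.

(** * The Fenchel conjugate on X *)

Section Conjugate.
Variables (X : NormedSpace) (g : dual X -> ER).

(* Upper bounds of the Fenchel conjugate [g^*] restricted to [X]. *)
Definition conj_ub (x : X) (r : R) := forall z c, g z = Fin c -> z x - c <= r.
Definition conj_dom (x : X) := exists r, conj_ub x r.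
Definition conjugate (x : X) := Rinf (conj_ub x).

Variables (z0 : dual X) (c0 : R).
Hypothesis g_z0 : g z0 = Fin c0.

Lemma conjugate_ub x : conj_dom x -> conj_ub x (conjugate x).
Proof. intros hx z c hz. apply Rinf_ge; [exact hx|]. intros r hr. exact (hr z c hz). Qed.

Lemma conjugate_le x r : conj_ub x r -> conjugate x <= r.
Proof. intro h. apply Rinf_le; auto. exists (z0 x - c0). intros r' hr'. exact (hr' z0 c0 g_z0). Qed.

Lemma conjugate_ge x z c : conj_dom x -> g z = Fin c -> z x - c <= conjugate x.
Proof. intros hx hz. exact (conjugate_ub x hx z c hz). Qed.

Lemma conjugate_sub_convex (s : dual X) x y t : 0 <= t <= 1 -> conj_dom x -> conj_dom y ->
  conj_dom (nadd (nscal t x) (nscal (1 - t) y)) /\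
  conjugate (nadd (nscal t x) (nscal (1 - t) y)) - s (nadd (nscal t x) (nscal (1 - t) y))
    <= t * (conjugate x - s x) + (1 - t) * (conjugate y - s y).
Proof.
  intros ht hx hy.
  assert (ub : conj_ub (nadd (nscal t x) (nscal (1 - t) y))
                       (t * conjugate x + (1 - t) * conjugate y)).
  { intros z c hz. pose proof (conjugate_ub x hx z c hz). pose proof (conjugate_ub y hy z c hz).
    rewrite dlin_add, !dlin_scal.
    assert (t * (z x - c) <= t * conjugate x) by (apply Rmult_le_compat_l; lra).
    assert ((1 - t) * (z y - c) <= (1 - t) * conjugate y) by (apply Rmult_le_compat_l; lra). lra. }
  split; [eexists; eauto|]. pose proof (conjugate_le _ _ ub). rewrite dlin_add, !dlin_scal. lra.
Qed.

Lemma conjugate_sub_lsc (s : dual X) y m :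
  (forall e, 0 < e -> exists y',
     nnorm (vsub y' y) < e /\ conj_dom y' /\ conjugate y' - s y' <= m + e) ->
  conj_dom y /\ conjugate y - s y <= m.
Proof.
  intro h. cut (conj_ub y (m + s y)).
  { intro hub. split; [eexists; eauto|]. pose proof (conjugate_le _ _ hub). lra. }
  intros z c hz. apply Rle_plus_epsilon. intros e he.
  destruct (dual_lipschitz X z) as [M1 [hM1 k1]]. destruct (dual_lipschitz X s) as [M2 [hM2 k2]].
  set (d := e / (M1 + M2 + 1)).
  assert (hd : 0 < d) by (apply Rdiv_lt_0_compat; lra).
  destruct (h d hd) as [y' [hy' [hD hf]]].
  pose proof (conjugate_ge y' z c hD hz).
  pose proof (Rabs_le_inv _ _ (k1 y y')). pose proof (Rabs_le_inv _ _ (k2 y y')).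
  rewrite vsub_nnorm_sym in H0, H1.
  assert (M1 * nnorm (vsub y' y) <= M1 * d) by (apply Rmult_le_compat_l; lra).
  assert (M2 * nnorm (vsub y' y) <= M2 * d) by (apply Rmult_le_compat_l; lra).
  assert (d * (M1 + M2 + 1) = e) by (unfold d; field; lra).
  lra.
Qed.

End Conjugate.

Theorem weak_star_lsc_affine_minorant (X : NormedSpace) (g : dual X -> ER)
  (g_convex : convex g) (g_lsc : weak_star_lsc g) (z0 : dual X) (c0 : R) (g_z0 : g z0 = Fin c0)
  (x1 : X) (x1_dom : conj_dom X g x1) (ys : dual X) (r : R) :
  ~ ER_le (g ys) (Fin r) ->
  exists x alpha, (forall z c, g z = Fin c -> z x - alpha <= c) /\ r < ys x - alpha.
Proof.
  intro hr. destruct x1_dom as [kappa hkappa].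
  assert (exists r', r < r' /\ ~ ER_le (g ys) (Fin r')) as [r' [hr1 hr2]].
  { destruct (g ys) as [v|]; simpl in hr.
    - exists ((r + v) / 2). simpl. lra.
    - exists (r + 1). simpl. split; auto. lra. }
  destruct (g_lsc ys r' hr2) as [l [d0 [hd0 hl]]].
  pose proof (Rmin_l d0 ((r' - r) / 2)). pose proof (Rmin_r d0 ((r' - r) / 2)).
  pose proof (Rmin_pos d0 ((r' - r) / 2) hd0 ltac:(lra)).
  set (d := Rmin d0 ((r' - r) / 2)) in *.
  apply (affine_minorant_above X g g_convex z0 c0 g_z0 x1 kappa)
    with (r0 := r' - d) (d := d) (l := l).
  - intros z c hz. specialize (hkappa z c hz). lra.
  - exact H1.
  - intros z c hz near. assert (hnear : forall x, In x l -> Rabs (z x - ys x) < d0).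
    { intros x hx. specialize (near x hx). lra. }
    specialize (hl z hnear). rewrite hz in hl. simpl in hl. lra.
  - lra.
Qed.

(* Were [g ys] larger, a weak*-continuous affine minorant [z |-> z x' - alpha] of [g] exceeding it
   at [ys] would give [g^* x' <= alpha], against the subgradient inequality at [x']. *)
Theorem conjugate_subgradient (X : NormedSpace) (g : dual X -> ER)
  (g_proper : proper g) (g_convex : convex g) (g_lsc : weak_star_lsc g)
  (x : X) (ys : dual X) : conj_dom X g x ->
  (forall y, conj_dom X g y -> conjugate X g x + ys (vsub y x) <= conjugate X g y) ->
  ER_le (g ys) (Fin (ys x - conjugate X g x)).
Proof.
  intros hx hsub. destruct g_proper as [z0 hz0]. unfold in_dom in hz0.
  destruct (g z0) as [c0|] eqn:gz0; [|contradiction].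
  apply NNPP. intro hn.
  destruct (weak_star_lsc_affine_minorant X g g_convex g_lsc z0 c0 gz0 x hx ys _ hn)
    as [x' [alpha [hmin hgt]]].
  assert (ub : conj_ub X g x' alpha) by (intros z c hz; specialize (hmin z c hz); lra).
  pose proof (conjugate_le X g z0 c0 gz0 _ _ ub).
  specialize (hsub x' (ex_intro _ alpha ub)). rewrite dual_vsub in hsub. lra.
Qed.

(** * The Brondsted-Rockafellar theorem in the dual *)

Section BrondstedRockafellar.
Variables (X : NormedSpace) (g : dual X -> ER).
Hypothesis X_complete : complete X.
Hypothesis g_proper : proper g.
Hypothesis g_convex : convex g.
Hypothesis g_lsc : weak_star_lsc g.
Variables (eps : R) (x0s : dual X) (x0 : X) (a : R).
Hypothesis eps_pos : 0 < eps.
Hypothesis g_x0s : g x0s = Fin a.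
Hypothesis x0_subdiff : forall ys : dual X, ER_le (Fin (ys x0 - x0s x0 + a - eps)) (g ys).

Let lam := sqrt eps.
Let lam_pos : 0 < lam := sqrt_lt_R0 _ eps_pos.
Let f x := conjugate X g x - x0s x.

Lemma shifted_conjugate_lb x : conj_dom X g x -> - a <= f x.
Proof. intro hx. pose proof (conjugate_ge X g x x0s a hx g_x0s). unfold f. lra. Qed.

Lemma x0_conj_ub : conj_ub X g x0 (x0s x0 - a + eps).
Proof.
  intros z c hz. specialize (x0_subdiff z). rewrite hz in x0_subdiff. simpl in x0_subdiff. lra.
Qed.

Lemma shifted_conjugate_x0 : conj_dom X g x0 /\ f x0 <= - a + eps.
Proof.
  split; [eexists; apply x0_conj_ub|].
  pose proof (conjugate_le X g x0s a g_x0s _ _ x0_conj_ub). unfold f. lra.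
Qed.

Lemma ekeland_conjugate : exists (xb : X) (w : dual X),
  conj_dom X g xb /\ (forall u, Rabs (w u) <= lam * nnorm u) /\
  f xb + lam * nnorm (vsub xb x0) <= f x0 /\
  (forall y, conj_dom X g y -> f xb + w (vsub y xb) <= f y).
Proof.
  destruct (ekeland X X_complete (conj_dom X g) f lam (- a) lam_pos shifted_conjugate_lb
    (conjugate_sub_lsc X g x0s a g_x0s x0s) x0 (proj1 shifted_conjugate_x0))
    as [xb [hxb [hclose hmin]]].
  destruct (ekeland_subgradient X (conj_dom X g) f lam xb lam_pos
    (conjugate_sub_convex X g x0s a g_x0s x0s) hxb hmin) as [w [hw hsub]].
  exists xb, w. auto.
Qed.

Lemma brondsted_rockafellar : exists (xb : X) (w : dual X) (gx : R),
  g (dual_lin 1 1 x0s w) = Fin gx /\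
  (forall z c, g z = Fin c -> z xb - c <= dual_lin 1 1 x0s w xb - gx) /\
  (forall u, Rabs (w u) <= lam * nnorm u) /\
  nnorm (vsub xb x0) <= lam /\
  Rabs (w (vsub xb x0)) <= eps /\
  a + w x0 - eps <= gx <= a + w x0 + eps.
Proof.
  destruct ekeland_conjugate as [xb [w [hxb [hw [hclose hsub]]]]].
  set (xes := dual_lin 1 1 x0s w).
  assert (xes_val : forall x, xes x = x0s x + w x) by (intro; simpl; ring).
  assert (lam2 : lam * lam = eps) by (apply sqrt_sqrt; lra).
  pose proof (shifted_conjugate_lb xb hxb). destruct shifted_conjugate_x0 as [hx0 fx0].
  assert (near : lam * nnorm (vsub xb x0) <= eps) by lra.
  assert (w_far : - eps <= w (vsub xb x0)).
  { specialize (hsub x0 hx0). rewrite dual_vsub in hsub |- *. lra. }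
  pose proof (Rabs_le_inv _ _ (hw (vsub xb x0))).
  assert (hg : ER_le (g xes) (Fin (xes xb - conjugate X g xb))).
  { apply conjugate_subgradient; auto. intros y hy. specialize (hsub y hy). unfold f in hsub.
    rewrite dual_vsub in hsub. rewrite xes_val, !dual_vsub. lra. }
  destruct (g xes) as [gx|] eqn:egx; simpl in hg; [|contradiction].
  exists xb, w, gx. repeat split; auto.
  - intros z c hz. pose proof (conjugate_ge X g xb z c hxb hz). simpl. lra.
  - apply Rmult_le_reg_l with lam; [exact lam_pos|]. lra.
  - apply Rabs_le. lra.
  - specialize (x0_subdiff xes). rewrite egx in x0_subdiff. simpl in x0_subdiff. lra.
  - rewrite dual_vsub in *. unfold f in *. lra.
Qed.

End BrondstedRockafellar.

Theorem mainTheorem2 (X : NormedSpace) (HX : complete X) (g : dual X -> ER)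
  (Hprop : proper g) (Hconv : convex g) (Hlsc : weak_star_lsc g)
  (eps beta : R) (Heps : 0 < eps) (Hbeta : 0 <= beta)
  (x0s : dual X) (x0 : X) (Hx0s : in_dom g x0s) (Hx0 : eps_subdiff_X g eps x0s x0) :
  exists (xes : dual X) (xe : X),
    in_dom g xes /\
    eps_subdiff_X g 0 xes xe /\
    dual_norm (dual_sub xes x0s) <= sqrt eps * (1 + beta * dual_norm x0s) /\
    Rabs (fval (g xes) - fval (g x0s))
      <= sqrt eps * (nnorm x0 + beta * Rabs (x0s x0)) + 2 * eps /\
    nnorm (vsub xe x0) <= sqrt eps /\
    (forall xs : dual X, Rabs (xs xe - xs x0) <= sqrt eps * dual_norm xs) /\
    eps_subdiff_X g (2 * eps) xes x0 /\
    Rabs (dual_sub xes x0s (vsub xe x0)) <= eps.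
Proof.
  destruct Hx0 as [a [ga Hsd]].
  destruct (brondsted_rockafellar X g HX Hprop Hconv Hlsc eps x0s x0 a Heps ga Hsd)
    as [xb [w [gx [egx [hsub [hw [hnear [hwnear [glo gup]]]]]]]]].
  set (xes := dual_lin 1 1 x0s w) in *.
  assert (diff : forall x, dual_sub xes x0s x = w x) by (intro; simpl; ring).
  assert (sq_eps := sqrt_pos eps).
  assert (extra : forall c, 0 <= c -> 0 <= sqrt eps * (beta * c))
    by (intros; repeat apply Rmult_le_pos; auto).
  exists xes, xb. repeat split.
  - unfold in_dom. now rewrite egx.
  - exists gx. split; auto. intro z. destruct (g z) as [c|] eqn:ez; simpl; auto.
    specialize (hsub z c ez). simpl in hsub. lra.
  - apply dual_norm_le. intros x hx. rewrite diff.
    pose proof (hw x). pose proof (extra _ (dual_norm_nonneg X x0s)).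
    assert (sqrt eps * nnorm x <= sqrt eps * 1) by (apply Rmult_le_compat_l; lra). lra.
  - rewrite egx, ga. simpl.
    pose proof (Rabs_le_inv _ _ (hw x0)). pose proof (extra _ (Rabs_pos (x0s x0))).
    apply Rabs_le. lra.
  - exact hnear.
  - intro xs. rewrite <- dual_vsub. eapply Rle_trans; [apply dual_norm_bound|].
    rewrite Rmult_comm. apply Rmult_le_compat_r; [apply dual_norm_nonneg|exact hnear].
  - exists gx. split; auto. intro z. destruct (g z) as [c|] eqn:ez; simpl; auto.
    specialize (Hsd z). rewrite ez in Hsd. simpl in Hsd. simpl. lra.
  - now rewrite diff.
Qed.
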